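(* Let $X$ be a Banach space over $\mathbb{K}\in\{\mathbb{R},\mathbb{C}\}$ and let $G_1, G_2 \in L(X)$ with $\|G_1\| = \|G_2\| = 1$. Suppose there exists a function $\phi : (0, 1] \to (0, 1]$ with $\phi(t) \to 1$ as $t \to 1$ such that for every $x \in S_X$ and $t\in(0,1]$, $\|G_1x\| \ge t$ implies $\|G_2x\| \ge \phi(t)$. Then $\|T\|_{G_1} \le \|T\|_{G_2}$ for every $T \in L(X)$.
   Context: $S_X$ is the unit sphere of $X$ and $L(X)$ the bounded linear operators on $X$. For a norm-one $G\in L(X)$, $\|T\|_G := \inf_{\delta>0}\sup\{\|Tx\|: x\in S_X,\ \|Gx\|>1-\delta\}$. *)

From HB Require Import structures.
From mathcomp Require Import all_boot all_order all_algebra.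
From mathcomp Require Import all_classical all_reals all_analysis.
Set Implicit Arguments. Unset Strict Implicit. Unset Printing Implicit Defensive.
Import Order.TTheory GRing.Theory Num.Theory.
Import numFieldNormedType.Exports.
Local Open Scope classical_set_scope.
Local Open Scope ring_scope.

Definition bounded_op (R : realType) (X : normedModType R) (T : X -> X) : Prop :=
  exists M : R, forall x : X, `|T x| <= M * `|x|.

Definition opnorm (R : realType) (X : normedModType R) (T : X -> X) : \bar R :=
  ereal_sup [set (`|T x|)%:E | x in [set x : X | `|x| <= 1]].

Definition Gnorm (R : realType) (X : normedModType R) (G T : X -> X) : \bar R :=
  ereal_inf [set ereal_sup [set (`|T x|)%:E |
                 x in [set x : X | `|x| = 1 /\ 1 - d < `|G x|]]
            | d in [set d : R | 0 < d]].

From HB Require Import structures.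
From mathcomp Require Import all_boot all_order all_algebra.
From mathcomp Require Import all_classical all_reals all_analysis.
Import Order.TTheory GRing.Theory Num.Theory.
Import numFieldNormedType.Exports.
Local Open Scope classical_set_scope.
Local Open Scope ring_scope.

(* Since phi t tends to 1 from below, for every delta > 0 there is delta' > 0
   such that ||G1 x|| > 1 - delta' forces ||G1 x|| >= t for some t close
   enough to 1 that phi t > 1 - delta, hence ||G2 x|| > 1 - delta.  So each
   set in the infimum defining ||T||_G2 contains one of the sets in the
   infimum defining ||T||_G1, and the inequality follows by monotonicity of
   sup and inf. *)

Lemma cvg_at_left_eventually_gt (R : realType) (f : R -> R) (a l c : R) :
    f t @[t --> a^'-] --> l -> c < l ->
  exists2 e, 0 < e & forall t, a - e < t < a -> c < f t.
Proof.
move=> f_cvg cl.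
have : \forall t \near a^'-, c < f t by exact: cvgr_gt l f_cvg c cl.
rewrite near_withinE => /nbhs_ballP [e /= e0 fe].
exists e => // t /andP[et ta]; apply: fe => //.
by rewrite /ball /= ger0_norm ?subr_ge0 ?(ltW ta) // ltrBlDr addrC -ltrBlDr.
Qed.

Section Gnorm_comparison.
Variables (R : realType) (X : normedModType R).

Definition Gslice (G : X -> X) (d : R) : set X :=
  [set x : X | `|x| = 1 /\ 1 - d < `|G x|].

Lemma Gnorm_le (G1 G2 T : X -> X) :
    (forall d, 0 < d -> exists2 d', 0 < d' & Gslice G1 d' `<=` Gslice G2 d) ->
  (Gnorm G1 T <= Gnorm G2 T)%E.
Proof.
move=> slice_sub; rewrite /Gnorm; apply: le_ereal_inf_tmp => _ [d d0 <-].
have [d' d'0 sub] := slice_sub d d0.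
apply: ge_ereal_inf; exists (ereal_sup [set (`|T x|)%:E | x in Gslice G1 d']).
  by exists d'.
by apply: ereal_sup_le => _ [x /sub x2 <-]; exists x.
Qed.

Variables (G1 G2 : X -> X) (phi : R -> R).
Hypothesis phi_cvg1 : phi t @[t --> (1 : R)^'-] --> (1 : R).
Hypothesis G1_ge_G2_ge : forall (x : X) (t : R), `|x| = 1 -> 0 < t <= 1 ->
  t <= `|G1 x| -> phi t <= `|G2 x|.

Lemma Gslice_sub (d : R) : 0 < d ->
  exists2 d', 0 < d' & Gslice G1 d' `<=` Gslice G2 d.
Proof.
move=> d0; have [|e e0 phi_gt] := @cvg_at_left_eventually_gt _ _ _ _ (1 - d) phi_cvg1.
  by rewrite ltrBlDr ltrDl.
pose d' := Num.min e 1.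
have d'0 : 0 < d' by rewrite lt_min e0 ltr01.
have d'e : d' <= e by rewrite ge_min lexx.
have d'1 : d' <= 1 by rewrite ge_min lexx orbT.
exists d' => // x [x1 G1x]; split=> //.
pose m := Num.min `|G1 x| 1.
have mG : m <= `|G1 x| by rewrite ge_min lexx.
have m1 : m <= 1 by rewrite ge_min lexx orbT.
have d'm : 1 - d' < m by rewrite lt_min G1x ltrBlDr ltrDl d'0.
(* any threshold t strictly between 1 - d' and m works; take the midpoint *)
have [d't tm] := midf_lt d'm; set t := (_ + _) / 2 in d't tm.
have t0 : 0 < t by rewrite (le_lt_trans _ d't) // subr_ge0.
apply: (lt_le_trans (phi_gt t _)).
  by rewrite (lt_le_trans tm m1) andbT (le_lt_trans _ d't) // lerD2l lerN2.
apply: G1_ge_G2_ge => //; first by rewrite t0 ltW // (lt_le_trans tm m1).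
exact: ltW (lt_le_trans tm mG).
Qed.

End Gnorm_comparison.

Theorem theorem3p14 (R : realType) (X : completeNormedModType R)
    (G1 G2 : {linear X -> X}) (hG1b : bounded_op G1) (hG2b : bounded_op G2)
    (hG1 : opnorm G1 = 1%E) (hG2 : opnorm G2 = 1%E)
    (phi : R -> R)
    (hphi_range : forall t, 0 < t <= 1 -> 0 < phi t <= 1)
    (hphi_lim : phi t @[t --> (1 : R)^'-] --> (1 : R))
    (hphi : forall (x : X) (t : R), `|x| = 1 -> 0 < t <= 1 ->
              t <= `|G1 x| -> phi t <= `|G2 x|) :
  forall T : {linear X -> X}, bounded_op T -> (Gnorm G1 T <= Gnorm G2 T)%E.
Proof.
move=> T _; apply: Gnorm_le => d d0.
exact: Gslice_sub hphi_lim hphi d d0.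
Qed.
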